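(* Let $G=(V,E)$ be a finite connected chordal graph. (i) If $\operatorname{diam}(G)<2\operatorname{rad}(G)$ then, for every vertices $s\in V$ and $t\in F(s)$, there is a vertex $w\in I(s,t)\cap C(G)$ such that $t\in F(w)$. (ii) If $\operatorname{diam}(G)=2\operatorname{rad}(G)$ then, for every vertices $s\in V$ and $t\in F(s)$, there is a vertex $w\in I(s,t)\cap C^1(G)$ such that $t\in F(w)$.
   Context: A graph is chordal if every induced cycle of length at least 4 has a chord. $d$ is the shortest-path distance, $e(v)=\max_u d(v,u)$, $\operatorname{rad}(G)=\min_v e(v)$, $\operatorname{diam}(G)=\max_v e(v)$. $F(s)=\{v: d(v,s)=e(s)\}$; $C(G)=\{c: e(c)=\operatorname{rad}(G)\}$; $C^1(G)=\{v: e(v)\le\operatorname{rad}(G)+1\}$; $I(u,v)=\{x: d(u,x)+d(x,v)=d(u,v)\}$. *)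

From mathcomp Require Import all_boot.
Local Open Scope nat_scope.
Set Implicit Arguments. Unset Strict Implicit. Unset Printing Implicit Defensive.

Section Graph.
Variables (T : finType) (e : rel T).

Definition simple_graph : Prop := symmetric e /\ irreflexive e.

Fixpoint walkn (n : nat) (x y : T) : bool :=
  match n with
  | 0 => x == y
  | n'.+1 => [exists z, e x z && walkn n' z y]
  end.

Definition connected_graph : Prop := forall x y : T, connect e x y.

(* shortest-path distance: least n with a walk of length n (any walk can be
   shortened to a path, of length < #|T|); defined as #|T| if unreachable *)
Definition dist (x y : T) : nat := find (fun n => walkn n x y) (iota 0 #|T|).

Definition ecc (v : T) : nat := \max_(u : T) dist v u.
(* minimum over a nonempty vertex set; the neutral element #|T| bounds all
   eccentricities, so it does not affect the value when T is nonempty *)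
Definition rad : nat := \big[minn/#|T|]_(v : T) ecc v.
Definition diam : nat := \max_(v : T) ecc v.

Definition far (s : T) : {set T} := [set v | dist v s == ecc s].
Definition center : {set T} := [set c | ecc c == rad].
Definition center1 : {set T} := [set v | ecc v <= rad.+1].
Definition interval (u v : T) : {set T} :=
  [set x | dist u x + dist x v == dist u v].

(* A cycle: a duplicate-free sequence c of vertices with consecutive
   (cyclically) vertices adjacent. A chord of c: an edge between two vertices
   of c that are not consecutive on the cycle. *)
Definition is_cycle (c : seq T) : bool := uniq c && cycle e c.

Definition has_chord (c : seq T) : bool :=
  [exists i : 'I_(size c), exists j : 'I_(size c),
     [&& (i < j)%N, (j != i.+1 :> nat), ~~ ((i == 0 :> nat) && (j.+1 == size c)) &
         e (tnth (in_tuple c) i) (tnth (in_tuple c) j)]].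

Definition chordal : Prop :=
  forall c : seq T, is_cycle c -> (4 <= size c)%N -> has_chord c.

End Graph.

From mathcomp Require Import all_boot zify.
Set Implicit Arguments. Unset Strict Implicit. Unset Printing Implicit Defensive.

(* In a chordal graph every edge of a cycle spans a triangle with a third vertex
   of the cycle. On cycles made of an edge and shortest paths this yields two
   metric facts: adjacent vertices equidistant from x have a common neighbour
   closer to x, and the alpha_1 inequality of chordal_alpha1.
   If t is farthest from s and diam <= 2 e(s) - 3, then s has a neighbour w on a
   shortest s-t path with e(w) = e(s) - 1: scan the vertices, keeping such a
   neighbour w within e(s) - 1 of all vertices seen so far; a vertex x too far
   from w is at distance e(s) from both w and s (alpha_1), and the common
   neighbour of w and s closer to x replaces w (alpha_1 again). Descending along
   the geodesic in this way while e(s) > rad, resp. e(s) > rad + 1, preserves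
   the diameter bound and ends at the required vertex. *)

Section ChordalEccentricity.
Variables (T : finType) (e : rel T).
Local Notation d := (dist e).

Lemma walknD m n x y z : walkn e m x y -> walkn e n y z -> walkn e (m + n) x z.
Proof.
elim: m x => [|m IH] x /=; first by move=> /eqP->.
by case/existsP=> u /andP[exu wuy] wyz; apply/existsP; exists u; rewrite exu IH.
Qed.

Lemma walkn1 x y : walkn e 1 x y = e x y.
Proof.
by apply/existsP/idP => [[z /andP[exz /eqP<-]] | exy] //; exists y; rewrite exy eqxx.
Qed.

Lemma path_walkn x p : path e x p -> walkn e (size p) x (last x p).
Proof.
elim: p x => [|u p IH] x /=; first by rewrite eqxx.
by case/andP=> exu pu; apply/existsP; exists u; rewrite exu IH.
Qed.

Lemma dist_le_walkn n x y : walkn e n x y -> d x y <= n.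
Proof.
move=> wn; case: (leqP #|T| n) => [lenN | ltnN].
  by apply: leq_trans lenN; rewrite -[#|T|](size_iota 0) find_size.
rewrite leqNgt; apply/negP => /(before_find 0).
by rewrite nth_iota // add0n wn.
Qed.

Lemma distxx x : d x x = 0.
Proof. by apply/eqP; rewrite -leqn0 dist_le_walkn //= eqxx. Qed.

Lemma dist_le_ecc s x : d s x <= ecc e s.
Proof. exact: (leq_bigmax (F := fun u => d s u) x). Qed.

Lemma ecc_le s m : (forall x, d s x <= m) -> ecc e s <= m.
Proof. by move=> le_m; apply/bigmax_leqP => x _. Qed.

Lemma dist_le_diam x y : d x y <= diam e.
Proof. exact: leq_trans (dist_le_ecc x y) (leq_bigmax (F := ecc e) x). Qed.

Lemma rad_le_ecc v : rad e <= ecc e v.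
Proof.
rewrite /rad unlock; elim: (index_enum T) (mem_index_enum v) => // u r IH.
by rewrite inE /= => /predU1P[->|/IH]; [exact: geq_minl | apply: leq_trans (geq_minr _ _)].
Qed.

Hypotheses (e_sym : symmetric e) (e_irr : irreflexive e).
Hypothesis e_conn : connected_graph e.

Lemma walkn_sym n x y : walkn e n x y -> walkn e n y x.
Proof.
elim: n x => [|n IH] x; first by move=> /= /eqP->.
case/existsP=> u /andP[exu wuy]; rewrite -addn1.
by apply: walknD (IH _ wuy) _; rewrite walkn1 e_sym.
Qed.

Lemma has_walkn_lt_card x y : has (fun n => walkn e n x y) (iota 0 #|T|).
Proof.
have /connectP[p xp ->] := e_conn x y.
case: (shortenP xp) => p' xp' uniq_p' _; apply/hasP; exists (size p').
  rewrite mem_iota /= -ltnS -[(size p').+1]/(size (x :: p')) -(card_uniqP uniq_p').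
  by rewrite ltnS max_card.
exact: path_walkn.
Qed.

Lemma dist_walkn x y : walkn e (d x y) x y.
Proof.
have has_w := has_walkn_lt_card x y.
have := nth_find 0 has_w; rewrite nth_iota ?add0n //.
by move: has_w; rewrite has_find size_iota.
Qed.

Lemma dist_eq0 x y : d x y = 0 -> x = y.
Proof. by move=> dxy; move: (dist_walkn x y); rewrite dxy => /eqP. Qed.

Lemma dist_gt0 x y : (0 < d x y) = (x != y).
Proof.
case: eqVneq => [->|neq_xy]; first by rewrite distxx.
by rewrite lt0n; apply: contra_neq neq_xy; apply: dist_eq0.
Qed.

Lemma dist_triangle x y z : d x z <= d x y + d y z.
Proof. exact/dist_le_walkn/walknD/dist_walkn/dist_walkn. Qed.

Lemma distC x y : d x y = d y x.
Proof. by apply/eqP; rewrite eqn_leq !dist_le_walkn // walkn_sym // dist_walkn. Qed.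

Lemma dist_edge x y : e x y -> d x y = 1.
Proof.
move=> exy; apply/eqP; rewrite eqn_leq dist_le_walkn ?walkn1 // dist_gt0.
by apply: contraTneq exy => ->; rewrite e_irr.
Qed.

Lemma dist_adj_le x y z : e x y -> d x z <= (d y z).+1.
Proof. by move=> exy; apply: leq_trans (dist_triangle x y z) _; rewrite dist_edge. Qed.

Lemma dist_step x y : 0 < d x y -> exists2 z, e x z & (d z y).+1 = d x y.
Proof.
move: (dist_walkn x y); case dxy: (d x y) => [|n] //= /existsP[z /andP[exz wzy]] _.
exists z => //; apply/eqP; rewrite eqSS eqn_leq dist_le_walkn //=.
by rewrite -ltnS -dxy dist_adj_le.
Qed.

Lemma geodesic_path x y : x != y -> exists p,
  [/\ path e x (rcons p y), x \notin p, y \notin p & {in p, forall z, d x z + d z y = d x y}].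
Proof.
have [n] := ubnP (d x y); elim: n x => // n IH x dxy_n neq_xy.
have [|z exz dzy] := @dist_step x y; first by rewrite dist_gt0.
have dxz := dist_edge exz.
case: (eqVneq z y) => [<- | neq_zy]; first by exists [::]; split => //=; rewrite exz.
have [|p [zp zNp yNp geo]] := IH z _ neq_zy; first lia.
exists (z :: p); split.
- by rewrite /= exz.
- by rewrite inE negb_or -dist_gt0 dxz /=; apply/negP => /geo; rewrite distC dxz; lia.
- by rewrite inE negb_or eq_sym neq_zy.
move=> w /predU1P[->|wp]; first lia.
have := geo w wp; have := dist_adj_le w exz; have := dist_triangle x w y; lia.
Qed.

Hypothesis e_chordal : chordal e.

Lemma has_chord_split c : has_chord e c ->
  exists A a M b B,
    [/\ c = A ++ a :: M ++ b :: B, e a b, 0 < size M & (0 < size A) || (0 < size B)].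
Proof.
case/existsP=> i /existsP[j /and4P[lt_ij neq_j_Si not_ends eij]].
have x0 := tnth (in_tuple c) i; rewrite !(tnth_nth x0) /= in eij.
have lt_ic := ltn_ord i; have lt_jc := ltn_ord j.
have lt_Sij : i.+1 < j by rewrite ltn_neqAle eq_sym neq_j_Si.
exists (take i c), (nth x0 c i), (take (j - i.+1) (drop i.+1 c)), (nth x0 c j), (drop j.+1 c).
split => //.
- rewrite -{1}(cat_take_drop i c) (drop_nth x0 lt_ic); congr (_ ++ _ :: _).
  rewrite -{1}(cat_take_drop (j - i.+1) (drop i.+1 c)) drop_drop subnK //.
  by rewrite (drop_nth x0 lt_jc).
- rewrite size_take_min leq_min size_drop !subn_gt0 lt_Sij.
  exact: ltn_trans lt_Sij lt_jc.
- rewrite size_takel ?(ltnW lt_ic) // size_drop subn_gt0.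
  by rewrite lt0n ltn_neqAle lt_jc andbT -negb_and.
Qed.

Lemma chordal_cycle_triangle c y x : uniq c -> sorted e c -> 2 < size c ->
  head y c = y -> last y c = x -> e x y ->
  exists z, [/\ z \in c, z != y, z != x, e z y & e z x].
Proof.
have [n] := ubnP (size c); elim: n c => // n IH c /ltnSE size_c uniq_c sorted_c c_gt2.
move=> head_c last_c exy; case: (ltnP 3 (size c)) => [c_gt3 | c_le3].
  have [|A [a [M [b [B [def_c eab M_nil AB_nil]]]]]] := has_chord_split (c := c).
    apply: e_chordal => //; rewrite /is_cycle uniq_c /=.
    case: c {size_c c_gt2 c_gt3 uniq_c} head_c sorted_c last_c => //= a r -> sorted_c last_c.
    by rewrite rcons_path sorted_c last_c exy.
  set c' := A ++ a :: b :: B.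
  have sub_c' : subseq c' c.
    rewrite def_c; apply: cat_subseq (subseq_refl A) _.
    rewrite -cat1s -(cat1s a (M ++ _)).
    exact: cat_subseq (subseq_refl _) (suffix_subseq _ _).
  have [|||||||z [z_c' ? ? ? ?]] := IH c';
    last by exists z; split => //; apply: mem_subseq z_c'.
  - by move: size_c; rewrite def_c /c' !size_cat /= size_cat /=; lia.
  - exact: subseq_uniq uniq_c.
  - move: sorted_c; rewrite def_c /c' !sorted_cat_cons cat_path /= eab.
    by case/and3P=> -> _ /andP[_ ->].
  - by rewrite /c' size_cat /=; lia.
  - by move: head_c; rewrite def_c /c'; case: (A).
  - by move: last_c; rewrite def_c /c' !last_cat /= last_cat.
  - exact: exy.
have size3 : size c = 3 by lia.
case: c {size_c c_gt2 c_le3} head_c last_c size3 uniq_c sorted_c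
  => [|a [|b [|x' []]]] //= -> -> _.
rewrite !inE => /and3P[/norP[neq_yb neq_yx] neq_bx _] /and3P[eyb ebx _].
by exists b; rewrite !inE eqxx orbT eq_sym neq_yb neq_bx ebx e_sym.
Qed.

Lemma chordal_path_triangle y x s : e x y -> path e y (rcons s x) ->
  y \notin s -> x \notin s -> s != [::] -> exists2 z, z \in s & e z x && e z y.
Proof.
case: s => [|s0 s] // exy /andP[ey0 ps] yNs xNs _.
move: (last_rcons s0 s x); case: (shortenP ps) => p s0p uniq_p sub_p last_p.
have sub_s : {subset s0 :: p <= s0 :: rcons s x}.
  by move=> z /predU1P[->|/sub_p zp]; rewrite inE ?eqxx ?zp ?orbT.
have p_nil : p != [::] by apply: contraNneq xNs => p0; rewrite -last_p p0 mem_head.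
have yNp : y \notin s0 :: p.
  apply: contra yNs => /sub_s; rewrite -cat1s -cats1 catA mem_cat mem_seq1.
  by case/orP => // /eqP yx; rewrite yx e_irr in exy.
have [||||||z [zc zNy zNx ezy ezx]] := @chordal_cycle_triangle (y :: s0 :: p) y x.
- by rewrite cons_uniq yNp.
- by rewrite /= ey0.
- by case: p p_nil {s0p uniq_p sub_p last_p sub_s yNp}.
- by [].
- by rewrite /= last_p.
- exact: exy.
exists z; last by rewrite ezx ezy.
move: zc; rewrite inE (negbTE zNy) => /sub_s.
by rewrite -cat1s -cats1 catA mem_cat mem_seq1 (negbTE zNx) orbF.
Qed.

(* [lia] becomes very slow in the presence of the many non-arithmetic boolean
   hypotheses (paths, memberships, edges) of the proofs below. *)
Ltac dist_lia :=
  repeat match goal with H : is_true ?b |- _ =>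
    lazymatch b with leq _ _ => fail | _ => clear H end end;
  lia.

Lemma chordal_common_neighbor u v x : e u v -> d u x = d v x -> 0 < d u x ->
  exists z, [/\ e z u, e z v & (d z x).+1 = d u x].
Proof.
move=> euv duv dux_gt0; have duv1 := dist_edge euv.
have neq_ux : u != x by rewrite -dist_gt0.
have neq_xv : x != v by rewrite -dist_gt0 distC -duv.
have [P [uP uNP _ geoP]] := geodesic_path neq_ux.
have [Q [xQ _ vNQ geoQ]] := geodesic_path neq_xv.
have sxu := distC x u; have sxv := distC x v.
have [|||||z zPQ /andP[ezv ezu]] := @chordal_path_triangle u v (P ++ x :: Q).
- by rewrite e_sym.
- by rewrite rcons_cat -cat_rcons cat_path uP last_rcons.
- by rewrite mem_cat inE !negb_or uNP neq_ux /=; apply/negP => /geoQ; dist_lia.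
- by rewrite mem_cat inE !negb_or vNQ eq_sym neq_xv !andbT; apply/negP => /geoP; dist_lia.
- by case: (P).
exists z; split=> //; have dzu := dist_edge ezu; have dzv := dist_edge ezv.
have szu := distC z u; have szx := distC z x.
move: zPQ; rewrite mem_cat inE => /or3P[/geoP | /eqP zx | /geoQ]; try dist_lia.
by move: dzu; rewrite zx distxx distC => ->.
Qed.

Lemma chordal_alpha1 u v w x : e v w -> d u w = (d u v).+1 -> d v x = (d w x).+1 ->
  d u v + d w x <= d u x.
Proof.
move=> evw duw dvx; have dvw := dist_edge evw.
case: (posnP (d u v)) => [/dist_eq0 eq_uv | duv_gt0]; first by subst v; rewrite distxx dvx.
case: (posnP (d w x)) => [/dist_eq0 eq_wx | dwx_gt0].
  by subst x; rewrite distxx addn0 duw.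
rewrite leqNgt; apply/negP => short_ux.
have neq_uv : u != v by rewrite -dist_gt0.
have neq_wx : w != x by rewrite -dist_gt0.
have sux := distC u x; have sxw := distC x w; have suw := distC u w.
have svx := distC v x; have svu := distC v u.
have neq_xu : x != u by apply/eqP => eq_xu; subst x; dist_lia.
have [Q [wQ wNQ _ geoQ]] := geodesic_path neq_wx.
have [R [xR _ _ geoR]] := geodesic_path neq_xu.
have [P [uP _ vNP geoP]] := geodesic_path neq_uv.
have [|||||z zs /andP[ezv ezw]] := @chordal_path_triangle w v (Q ++ x :: R ++ u :: P).
- exact: evw.
- have -> : rcons (Q ++ x :: R ++ u :: P) v = rcons Q x ++ rcons R u ++ rcons P v.
    by rewrite !cat_rcons rcons_cat /= rcons_cat.
  by rewrite !cat_path wQ !last_rcons xR uP.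
- rewrite !(mem_cat, inE); apply/negP.
  case/or3P=> [| /eqP eq_wx | /or3P[/geoR | /eqP eq_wu | /geoP]].
  + by rewrite (negbTE wNQ).
  + by rewrite eq_wx eqxx in neq_wx.
  + dist_lia.
  + by move: duw; rewrite eq_wu distxx.
  + dist_lia.
- rewrite !(mem_cat, inE); apply/negP.
  case/or3P=> [/geoQ | /eqP eq_vx | /or3P[/geoR | /eqP eq_vu | ]].
  + dist_lia.
  + by move: dvx; rewrite eq_vx distxx.
  + dist_lia.
  + by rewrite eq_vu eqxx in neq_uv.
  + by rewrite (negbTE vNP).
- by case: (Q).
have dzv := dist_edge ezv; have dzw := dist_edge ezw.
have ewz : e w z by rewrite e_sym.
have evz : e v z by rewrite e_sym.
have := dist_adj_le u ewz; have := dist_adj_le x evz.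
have swz := distC w z; have szu := distC z u; have sxz := distC x z.
move: zs; rewrite !(mem_cat, inE).
case/or3P=> [/geoQ | /eqP eq_zx | /or3P[/geoR | /eqP eq_zu | /geoP]]; try dist_lia.
- by move: dzv; rewrite eq_zx distC dvx; dist_lia.
- by move: dzw; rewrite eq_zu duw; dist_lia.
Qed.

Lemma dist_lt_toward_far k w z x y : diam e + 3 <= 2 * k -> e w z ->
  d w x = k -> (d z x).+1 = k -> d w y < k -> d z y < k.
Proof.
move=> diam_k ewz dwx dzx dwy; rewrite ltnNge; apply/negP => dzy.
have ezw : e z w by rewrite e_sym.
have dyz : d y z = (d y w).+1.
  by have := dist_adj_le y ezw; rewrite (distC y z) (distC y w); lia.
have := chordal_alpha1 ewz dyz (etrans dwx (esym dzx)); have := dist_le_diam y x.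
have := distC y w; have := distC y z; lia.
Qed.

Section DescentTowardFar.
Variables s t : T.
Hypothesis diam_small : diam e + 3 <= 2 * ecc e s.
Hypothesis t_far : d s t = ecc e s.

Lemma far_step_dist w x : e s w -> (d w t).+1 = ecc e s -> ecc e s <= d w x ->
  d w x = ecc e s /\ d s x = ecc e s.
Proof.
move=> esw dwt k_le_dwx; have ews : e w s by rewrite e_sym.
have := dist_le_ecc s x; have := dist_adj_le x ews.
case: (ltnP (d s x) (ecc e s)) => [dsx_lt | dsx_ge] dwx dsx.
  have dxw : d x w = (d x s).+1 by rewrite distC (distC x s); lia.
  have := chordal_alpha1 esw dxw (etrans t_far (esym dwt)); have := dist_le_diam x t.
  have := distC x s; lia.
have dsx_eq : d s x = ecc e s by lia.
split=> //; apply/eqP; rewrite eqn_leq k_le_dwx andbT leqNgt; apply/negP => dwx_gt.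
have dts : d t s = (d t w).+1 by rewrite distC (distC t w); lia.
have dwx_eq : d w x = (d s x).+1 by lia.
have := chordal_alpha1 ews dts dwx_eq; have := dist_le_diam t x.
have := distC t w; lia.
Qed.

Lemma far_step_update w x : e s w -> (d w t).+1 = ecc e s ->
  exists z, [/\ e s z, (d z t).+1 = ecc e s, d z x < ecc e s &
              forall y, d w y < ecc e s -> d z y < ecc e s].
Proof.
move=> esw dwt; case: (ltnP (d w x) (ecc e s)) => [dwx_lt | dwx_ge]; first by exists w.
have [dwx dsx] := far_step_dist esw dwt dwx_ge.
have ews : e w s by rewrite e_sym.
have [|z [ezw ezs dzx]] := chordal_common_neighbor ews (etrans dwx (esym dsx)); first lia.
have ewz : e w z by rewrite e_sym.
have near_z := dist_lt_toward_far diam_small ewz dwx (etrans dzx dwx).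
have esz : e s z by rewrite e_sym.
exists z; split => //; last lia.
by have := near_z t; have := dist_adj_le t esz; lia.
Qed.

Lemma far_step_ecc_lt : exists w, [/\ e s w, (d w t).+1 = ecc e s & ecc e w < ecc e s].
Proof.
suff [w [esw dwt near_w]] : exists w,
    [/\ e s w, (d w t).+1 = ecc e s & forall x, x \in enum T -> d w x < ecc e s].
  exists w; split => //; suff : ecc e w <= (ecc e s).-1 by lia.
  by apply: ecc_le => x; have := near_w x (mem_enum _ x); lia.
elim: (enum T) => [|x r [w [esw dwt near_w]]].
  have [|w esw dwt] := @dist_step s t; first by rewrite t_far; lia.
  by exists w; rewrite -t_far.
have [z [esz dzt dzx near_z]] := far_step_update x esw dwt.
by exists z; split => // y /predU1P[-> // | /near_w /near_z].
Qed.

End DescentTowardFar.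

Lemma geodesic_to_far_ecc_le m s t : diam e < 2 * m -> d s t = ecc e s ->
  exists w, [/\ d s w + d w t = d s t, ecc e w <= m & d w t = ecc e w].
Proof.
move=> diam_m; have [n] := ubnP (ecc e s); elim: n s => // n IH s /ltnSE ecc_n t_far.
case: (leqP (ecc e s) m) => [ecc_le_m | m_lt_ecc]; first by exists s; rewrite distxx.
have [|w1 [esw1 dw1t ecc_w1]] := far_step_ecc_lt (_ : diam e + 3 <= 2 * ecc e s) t_far.
  by lia.
have w1_far : d w1 t = ecc e w1 by have := dist_le_ecc w1 t; lia.
have [|w [w1wt ecc_w w_far]] := IH w1 _ w1_far; first lia.
exists w; split => //.
by have := dist_triangle s w1 w; have := dist_triangle s w t; have := dist_edge esw1; lia.
Qed.

Lemma far_interval_ecc_le m s t : diam e < 2 * m -> t \in far e s ->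
  exists w, [/\ w \in interval e s t, ecc e w <= m & t \in far e w].
Proof.
move=> diam_m; rewrite inE distC => /eqP t_far.
have [w [swt ecc_w w_far]] := geodesic_to_far_ecc_le diam_m t_far.
by exists w; rewrite !inE swt (distC t w) w_far !eqxx.
Qed.

End ChordalEccentricity.

Theorem proposition7 (T : finType) (e : rel T) :
  simple_graph e -> connected_graph e -> chordal e ->
  ((diam e < 2 * rad e)%N ->
     forall s t : T, t \in far e s ->
       exists w : T, [/\ w \in interval e s t, w \in center e & t \in far e w]) /\
  (diam e = 2 * rad e ->
     forall s t : T, t \in far e s ->
       exists w : T, [/\ w \in interval e s t, w \in center1 e & t \in far e w]).
Proof.
move=> [e_sym e_irr] e_conn e_chordal.
have far_ecc_le := far_interval_ecc_le e_sym e_irr e_conn e_chordal.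
split=> [diam_lt | diam_eq] s t /far_ecc_le.
  case/(_ (rad e) diam_lt) => w [st_w ecc_w t_far].
  by exists w; split => //; rewrite inE eqn_leq ecc_w rad_le_ecc.
case/(_ (rad e).+1 _) => [| w [st_w ecc_w t_far]]; first by rewrite diam_eq; lia.
by exists w; split => //; rewrite inE ecc_w.
Qed.
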